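(* Let $Q_0,Q_1,Q_2\in\mathbb{S}^n$, $q_0,q_1,q_2\in\mathbb{R}^n$, $b_1,b_2\in\mathbb{R}$, and $A_i=\begin{pmatrix}0 & q_i^\top/2\\ q_i/2 & Q_i\end{pmatrix}$ for $i=0,1,2$. Let $\mathbf{V}_{\mathrm{opt}}=\inf\{\langle A_0,X\rangle: X\in\mathbb{S}^{n+1}_+,\ \operatorname{rank}(X)\le1,\ X_{11}=1,\ \langle A_i,X\rangle\le b_i,\ i=1,2\}$ (equal to the optimal value of $\min\{x^\top Q_0x+q_0^\top x: x^\top Q_ix+q_i^\top x\le b_i,\ i=1,2\}$) and $\mathbf{V}_{\mathrm{rel}}=\inf\{\langle A_0,X\rangle: X\in\mathbb{S}^{n+1}_+,\ X_{11}=1,\ \langle A_i,X\rangle\le b_i,\ i=1,2\}$. Suppose $\mathbf{V}_{\mathrm{rel}}$ is finite and the set of optimal solutions of the latter (relaxed) problem is bounded. If there is an optimal solution of the relaxed problem at which one of the two constraints $\langle A_i,X\rangle\le b_i$ ($i\in\{1,2\}$) is not binding, then $\mathbf{V}_{\mathrm{opt}}=\mathbf{V}_{\mathrm{rel}}$.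
   Context: $\langle A,X\rangle=\operatorname{tr}(A^\top X)$; $\mathbb{S}^n$ denotes symmetric $n\times n$ matrices and $\mathbb{S}^{n+1}_+$ positive semidefinite $(n+1)\times(n+1)$ matrices. A constraint $\langle A_i,X\rangle\le b_i$ is binding at $X$ if it holds with equality. *)

From HB Require Import structures.
From mathcomp Require Import all_boot all_order all_algebra.
From mathcomp Require Import all_classical all_reals ereal.
Set Implicit Arguments. Unset Strict Implicit. Unset Printing Implicit Defensive.
Import Order.TTheory GRing.Theory Num.Theory.
Local Open Scope ring_scope.
Local Open Scope classical_set_scope.

Definition frob (R : realType) (m : nat) (A X : 'M[R]_m) : R := \tr (A^T *m X).

Definition psd (R : realType) (m : nat) (X : 'M[R]_m) : Prop :=
  X^T = X /\ forall v : 'rV[R]_m, 0 <= (v *m X *m v^T) 0 0.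

Definition liftA (R : realType) (n : nat) (Q : 'M[R]_n) (q : 'cV[R]_n) : 'M[R]_(1 + n) :=
  block_mx (0 : 'M[R]_1) ((2%:R)^-1 *: q^T) ((2%:R)^-1 *: q) Q.

Definition feas_rel (R : realType) (n : nat) (A1 A2 : 'M[R]_(1 + n)) (b1 b2 : R)
  (X : 'M[R]_(1 + n)) : Prop :=
  psd X /\ X ord0 ord0 = 1 /\ frob A1 X <= b1 /\ frob A2 X <= b2.

Definition feas_opt (R : realType) (n : nat) (A1 A2 : 'M[R]_(1 + n)) (b1 b2 : R)
  (X : 'M[R]_(1 + n)) : Prop :=
  feas_rel A1 A2 b1 b2 X /\ (\rank X <= 1)%N.

Definition Vrel (R : realType) (n : nat) (A0 A1 A2 : 'M[R]_(1 + n)) (b1 b2 : R) : \bar R :=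
  ereal_inf [set (frob A0 X)%:E | X in feas_rel A1 A2 b1 b2].

Definition Vopt (R : realType) (n : nat) (A0 A1 A2 : 'M[R]_(1 + n)) (b1 b2 : R) : \bar R :=
  ereal_inf [set (frob A0 X)%:E | X in feas_opt A1 A2 b1 b2].

From HB Require Import structures.
From mathcomp Require Import all_boot all_order all_algebra.
From mathcomp Require Import all_classical all_reals ereal.
From mathcomp Require Import ring lra.
Import Order.TTheory GRing.Theory Num.Theory.
Local Open Scope ring_scope.

(* Write an optimal X as y y^T + W, with y the first column of X; then W is psd
   and W_00 = 0.  If some W_kk > 0, let w be the k-th column of W and consider the
   two-parameter family X(a, d) = X + a (y w^T + w y^T) + d w w^T.  It equals
   (y + a w)(y + a w)^T + (1/W_kk + d - a^2) w w^T + S, where S is the Schur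
   complement of W_kk in W, so it is psd in the region a^2 <= 1/W_kk + d, of which
   (0, 0) is an interior point.  Objective and constraints are affine in (a, d):
   optimality of (0, 0) and the slack constraint let us slide, without increasing the
   objective, to a point of the parabola a^2 = 1/W_kk + d, unless the optimal face
   contains a ray, which the boundedness hypothesis excludes.  There X(a, d) is again
   optimal, of the form y' y'^T + S, and S has fewer nonzero diagonal entries than W.
   Iterating reaches W = 0, i.e. a rank-one optimal solution. *)

Section PsdMatrices.
Context {R : realType} {m : nat}.
Implicit Types (B C : 'M[R]_m) (u v : 'rV[R]_m) (y z : 'cV[R]_m).

Definition bilform B u v : R := (u *m B *m v^T) 0 0.

Lemma bilformDl B u1 u2 v : bilform B (u1 + u2) v = bilform B u1 v + bilform B u2 v.
Proof. by rewrite /bilform !mulmxDl mxE. Qed.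

Lemma bilformZl B t u v : bilform B (t *: u) v = t * bilform B u v.
Proof. by rewrite /bilform -!scalemxAl mxE. Qed.

Lemma bilformDr B u v1 v2 : bilform B u (v1 + v2) = bilform B u v1 + bilform B u v2.
Proof. by rewrite /bilform linearD /= mulmxDr mxE. Qed.

Lemma bilformZr B t u v : bilform B u (t *: v) = t * bilform B u v.
Proof. by rewrite /bilform linearZ /= -scalemxAr mxE. Qed.

Lemma bilformC B u v : B^T = B -> bilform B u v = bilform B v u.
Proof.
move=> BT; rewrite /bilform.
have -> : (u *m B *m v^T) 0 0 = (u *m B *m v^T)^T 0 0 by rewrite [RHS]mxE.
by rewrite !trmx_mul trmxK BT mulmxA.
Qed.

Lemma bilformD B C u v : bilform (B + C) u v = bilform B u v + bilform C u v.
Proof. by rewrite /bilform mulmxDr mulmxDl mxE. Qed.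

Lemma bilformZ t B u v : bilform (t *: B) u v = t * bilform B u v.
Proof. by rewrite /bilform -scalemxAr -scalemxAl mxE. Qed.

Lemma bilform_outer y z u v : bilform (y *m z^T) u v = (u *m y) 0 0 * (v *m z) 0 0.
Proof.
rewrite /bilform mulmxA -(mulmxA (u *m y)) -trmx_mul [LHS]mxE big_ord1.
by rewrite [(_^T) _ _]mxE.
Qed.

Lemma bilform_delta B i j : bilform B (delta_mx 0 i) (delta_mx 0 j) = B i j.
Proof. by rewrite /bilform -(rowE i B) trmx_delta -colE !mxE. Qed.

Lemma mul_col_bilform B u k : (u *m col k B) 0 0 = bilform B u (delta_mx 0 k).
Proof. by rewrite /bilform trmx_delta colE mulmxA. Qed.

Lemma psd_bilform_ge0 B u : psd B -> 0 <= bilform B u u.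
Proof. by case=> _; apply. Qed.

Lemma psd_cauchy_schwarz B u v :
  psd B -> bilform B u v ^+ 2 <= bilform B u u * bilform B v v.
Proof.
move=> psdB; have [BT _] := psdB.
set a := bilform B u u; set b := bilform B u v; set c := bilform B v v.
have quad s t : 0 <= s ^+ 2 * a + 2 * s * t * b + t ^+ 2 * c.
  have := @psd_bilform_ge0 B (s *: u + t *: v) psdB.
  rewrite !(bilformDl, bilformDr, bilformZl, bilformZr) (bilformC B v u BT) -/a -/b -/c.
  by move=> h; nra.
have : 0 <= c by exact: psd_bilform_ge0.
rewrite le_eqVlt => /predU1P[c0|c_gt0].
  by have := quad (2 * b) (- (a + 1)); rewrite -c0; nra.
by have := quad c (- b); nra.
Qed.

Lemma psd_diag_ge0 B i : psd B -> 0 <= B i i.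
Proof. by rewrite -bilform_delta; apply: psd_bilform_ge0. Qed.

Lemma psd_entry_sqr_le B i j : psd B -> B i j ^+ 2 <= B i i * B j j.
Proof. by rewrite -!bilform_delta; apply: psd_cauchy_schwarz. Qed.

Lemma psd_diag_eq0 B i j : psd B -> B i i = 0 -> B i j = 0.
Proof.
move=> psdB Bii0; apply/eqP; rewrite -sqrf_eq0 eq_le sqr_ge0 andbT.
by have := psd_entry_sqr_le B i j psdB; rewrite Bii0 mul0r.
Qed.

Lemma psdD B C : psd B -> psd C -> psd (B + C).
Proof.
move=> [BT Bge0] [CT Cge0]; split; first by rewrite linearD /= BT CT.
by move=> v; rewrite mulmxDr mulmxDl mxE addr_ge0.
Qed.

Lemma psdZ t B : 0 <= t -> psd B -> psd (t *: B).
Proof.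
move=> t_ge0 [BT Bge0]; split; first by rewrite linearZ /= BT.
by move=> v; rewrite -scalemxAr -scalemxAl mxE mulr_ge0.
Qed.

Lemma psd_outer y : psd (y *m y^T).
Proof.
split=> [|v]; first by rewrite trmx_mul trmxK.
by rewrite -/(bilform _ v v) bilform_outer -expr2 sqr_ge0.
Qed.

Definition diag_support B : {set 'I_m} := [set i | B i i != 0].

Lemma psd_diag0_eq0 B : psd B -> (forall i, B i i = 0) -> B = 0.
Proof. by move=> psdB diag0; apply/matrixP => i j; rewrite mxE psd_diag_eq0. Qed.

(* When [B k k = 0] the junk inverse [0^-1 = 0] makes [schur_comp B k = B]. *)
Definition schur_comp B k := B - (B k k)^-1 *: (col k B *m (col k B)^T).

Lemma schur_compE B k i j :
  schur_comp B k i j = B i j - (B k k)^-1 * (B i k * B j k).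
Proof. by rewrite !mxE big_ord1 !mxE. Qed.

Lemma psd_schur_comp B k : psd B -> psd (schur_comp B k).
Proof.
move=> psdB; have [BT Bge0] := psdB.
have [Bkk0|Bkk_neq0] := eqVneq (B k k) 0.
  by rewrite /schur_comp Bkk0 invr0 scale0r subr0.
split.
  by rewrite /schur_comp linearB linearZ /= trmx_mul trmxK BT.
move=> u; rewrite -/(bilform _ u u) bilformD -scaleNr bilformZ bilform_outer.
rewrite !mul_col_bilform.
have := psd_cauchy_schwarz B u (delta_mx 0 k) psdB; rewrite bilform_delta.
have := Bge0 u; rewrite -/(bilform _ u u).
have mu_gt0 : 0 < (B k k)^-1 by rewrite invr_gt0 lt_def Bkk_neq0 psd_diag_ge0.
have mulVBkk : (B k k)^-1 * B k k = 1 by rewrite mulVf.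
set a := bilform B u u; set b := bilform B u (delta_mx 0 k); nra.
Qed.

Lemma diag_support_schur_comp B k :
  psd B -> k \in diag_support B -> diag_support (schur_comp B k) \proper diag_support B.
Proof.
rewrite inE => psdB Bkk_neq0; apply/properP; split.
  apply/fintype.subsetP => i; rewrite !inE schur_compE; apply: contra_neq => Bii0.
  by rewrite Bii0 (psd_diag_eq0 _ _ k psdB Bii0) mul0r mulr0 subr0.
by exists k; rewrite !inE ?schur_compE ?Bkk_neq0 // mulrA mulVf // mul1r subrr eqxx.
Qed.

Lemma schur_comp_pencil B y k a d :
  y *m y^T + B + a *: (y *m (col k B)^T + col k B *m y^T) + d *: (col k B *m (col k B)^T)
  = (y + a *: col k B) *m (y + a *: col k B)^T
    + ((B k k)^-1 + d - a ^+ 2) *: (col k B *m (col k B)^T) + schur_comp B k.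
Proof. by apply/matrixP => i j; rewrite !mxE !big_ord1 !mxE; ring. Qed.

End PsdMatrices.

Lemma small_perturbation {R : realFieldType} {mu s : R} (x y z : R) : 0 < mu -> 0 < s ->
  exists2 e, 0 < e & forall t, `|t| <= e -> (t * x) ^+ 2 <= mu + t * y /\ t * z <= s.
Proof.
move=> mu_gt0 s_gt0.
have Ky_gt0 : 0 < 1 + x ^+ 2 + `|y| by have := sqr_ge0 x; have := normr_ge0 y; lra.
have Kz_gt0 : 0 < 1 + `|z| by have := normr_ge0 z; lra.
exists (Num.min 1 (Num.min (mu / (1 + x ^+ 2 + `|y|)) (s / (1 + `|z|)))).
  by rewrite !lt_min ltr01 !divr_gt0.
move=> t; rewrite !le_min (ler_pdivlMr _ _ Ky_gt0) (ler_pdivlMr _ _ Kz_gt0).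
move=> /and3P[t_le1 ty_le tz_le].
have t2_le : t ^+ 2 <= `|t| by rewrite -real_normK ?num_real // expr2 ler_piMl.
have /andP[ty_ge _] : - (`|t| * `|y|) <= t * y <= `|t| * `|y| by rewrite -ler_norml normrM.
have /andP[_ tz_le'] : - (`|t| * `|z|) <= t * z <= `|t| * `|z| by rewrite -ler_norml normrM.
have tx2_le : (t * x) ^+ 2 <= `|t| * x ^+ 2 by rewrite exprMn ler_wpM2r ?sqr_ge0.
split; nra.
Qed.

Lemma exists_nonneg_root {R : rcfType} {A c : R} (q : R) : 0 < A -> 0 <= c ->
  exists2 t, 0 <= t & A * t ^+ 2 = c + q * t.
Proof.
move=> A_gt0 c_ge0; pose D := q ^+ 2 + 4 * A * c.
have sqrtD2 : Num.sqrt D ^+ 2 = D by rewrite sqr_sqrtr // addr_ge0 ?sqr_ge0 // !mulr_ge0 // ltW.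
have q_le : - q <= Num.sqrt D.
  rewrite (le_trans (ler_norm _)) // normrN -sqrtr_sqr ler_wsqrtr // lerDl.
  by rewrite !mulr_ge0 // ltW.
exists ((q + Num.sqrt D) / (2 * A)).
  by apply: divr_ge0; [lra | rewrite mulr_ge0 // ltW].
have A_neq0 : A != 0 by rewrite gt_eqF.
rewrite /D in sqrtD2; apply/eqP; rewrite -subr_eq0.
have -> : A * ((q + Num.sqrt D) / (2 * A)) ^+ 2 - (c + q * ((q + Num.sqrt D) / (2 * A)))
          = (Num.sqrt D ^+ 2 - (q ^+ 2 + 4 * A * c)) / (4 * A) by field.
by rewrite sqrtD2 subrr mul0r.
Qed.

Lemma exists_root_opposite_sign {R : rcfType} {A c : R} (q k : R) : 0 < A -> 0 <= c ->
  exists t, A * t ^+ 2 = c + q * t /\ t * k <= 0.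
Proof.
move=> A_gt0 c_ge0; have [k_le0|k_gt0] := lerP k 0.
  have [t t_ge0 root_t] := exists_nonneg_root q A_gt0 c_ge0.
  by exists t; split; last exact: mulr_ge0_le0.
have [t t_ge0 root_t] := exists_nonneg_root (- q) A_gt0 c_ge0.
exists (- t); split; first by rewrite sqrrN root_t mulrN mulNr.
by rewrite mulNr oppr_le0 mulr_ge0 // ltW.
Qed.

(* [p_j + a r_j + d s_j] are the objective (j = 0) and the constraints (j = 1, 2)
   along the family X(a, d), and [a ^+ 2 <= mu + d] is the region where it is psd. *)
Section ParabolaDescent.
Context {R : rcfType} {mu b1 b2 p0 r0 s0 p1 r1 s1 p2 r2 s2 : R}.
Hypotheses (mu_gt0 : 0 < mu) (p1_le : p1 <= b1) (p2_lt : p2 < b2).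
Hypothesis origin_min : forall a d, a ^+ 2 <= mu + d ->
  p1 + a * r1 + d * s1 <= b1 -> p2 + a * r2 + d * s2 <= b2 -> p0 <= p0 + a * r0 + d * s0.

Lemma origin_min_stationary x y : x * r1 + y * s1 = 0 -> x * r0 + y * s0 = 0.
Proof.
move=> xy_r1s1; have slack2_gt0 : 0 < b2 - p2 by rewrite subr_gt0.
have [e e_gt0 small] := small_perturbation x y (x * r2 + y * s2) mu_gt0 slack2_gt0.
have descent t : `|t| <= e -> 0 <= t * (x * r0 + y * s0).
  move=> /small[par slack2].
  have e1 : t * x * r1 + t * y * s1 = t * (x * r1 + y * s1) by ring.
  have e2 : t * x * r2 + t * y * s2 = t * (x * r2 + y * s2) by ring.
  have e0 : t * x * r0 + t * y * s0 = t * (x * r0 + y * s0) by ring.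
  have := origin_min (t * x) (t * y) par.
  rewrite -!addrA e0 e1 e2 xy_r1s1 mulr0 addr0 lerDl => /(_ p1_le); apply; lra.
have := descent (- e); have := descent e; rewrite normrN gtr0_norm // lexx.
move=> /(_ isT) e_pos /(_ isT) e_neg; have : e * (x * r0 + y * s0) = 0 by lra.
by move/eqP; rewrite mulf_eq0 gt_eqF //= => /eqP.
Qed.

Lemma parabola_descent_s1_neq0 : s1 != 0 -> exists a,
  [/\ p1 + a * r1 + (a ^+ 2 - mu) * s1 <= b1, p2 + a * r2 + (a ^+ 2 - mu) * s2 < b2
    & p0 + a * r0 + (a ^+ 2 - mu) * s0 <= p0].
Proof.
(* Along the direction (s1, -r1) constraint 1 and the objective are constant; go to
   the intersection with the parabola on the side where constraint 2 decreases. *)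
move=> s1_neq0.
have stat : s1 * r0 + - r1 * s0 = 0 by apply: origin_min_stationary; ring.
have s1sq_gt0 : 0 < s1 ^+ 2 by rewrite lt_def sqr_ge0 sqrf_eq0 s1_neq0.
have [t [root_t sign_t]] :=
  exists_root_opposite_sign (- r1) (s1 * r2 - r1 * s2) s1sq_gt0 (ltW mu_gt0).
exists (t * s1); have -> : (t * s1) ^+ 2 - mu = - r1 * t.
  by rewrite exprMn mulrC root_t; ring.
split.
- by have -> : p1 + t * s1 * r1 + - r1 * t * s1 = p1 by ring.
- have -> : p2 + t * s1 * r2 + - r1 * t * s2 = p2 + t * (s1 * r2 - r1 * s2) by ring.
  by rewrite (le_lt_trans _ p2_lt) // gerDl.
- have -> : p0 + t * s1 * r0 + - r1 * t * s0 = p0 + t * (s1 * r0 + - r1 * s0) by ring.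
  by rewrite stat mulr0 addr0.
Qed.

Lemma parabola_descent M :
  (forall d, 0 <= d -> p1 + d * s1 <= b1 -> p2 + d * s2 <= b2 -> p0 + d * s0 = p0 -> d <= M) ->
  exists a,
  [/\ p1 + a * r1 + (a ^+ 2 - mu) * s1 <= b1, p2 + a * r2 + (a ^+ 2 - mu) * s2 < b2
    & p0 + a * r0 + (a ^+ 2 - mu) * s0 <= p0].
Proof.
move=> bounded; have [s1_eq0|] := eqVneq s1 0; last exact: parabola_descent_s1_neq0.
have s0_eq0 : s0 = 0.
  by have := origin_min_stationary 0 1; rewrite s1_eq0 !mul0r !mul1r !add0r; apply.
have [s2_ge0|s2_lt0] := lerP 0 s2.
  exists 0; rewrite s1_eq0 s0_eq0 expr0n /= sub0r !mul0r !mulr0 !addr0 mulNr.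
  by split=> //; rewrite ltrBlDr ltr_wpDr // mulr_ge0 // ltW.
(* Otherwise the whole ray a = 0, d >= 0 is feasible and optimal. *)
have M_le : M <= Num.max M 0 by rewrite le_max lexx.
have max_ge0 : 0 <= Num.max M 0 by rewrite le_max lexx orbT.
have : Num.max M 0 + 1 <= M.
  apply: bounded; rewrite ?s1_eq0 ?s0_eq0 ?mulr0 ?addr0 ?addr_ge0 //.
  by rewrite (le_trans _ (ltW p2_lt)) // gerDl mulr_ge0_le0 ?addr_ge0 // ltW.
by rewrite leNgt (le_lt_trans M_le) // ltrDl.
Qed.

End ParabolaDescent.

Lemma frobD {R : realType} {m : nat} (A B C : 'M[R]_m) : frob A (B + C) = frob A B + frob A C.
Proof. by rewrite /frob mulmxDr mxtraceD. Qed.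

Lemma frobZ {R : realType} {m : nat} (A B : 'M[R]_m) t : frob A (t *: B) = t * frob A B.
Proof. by rewrite /frob -scalemxAr mxtraceZ. Qed.

Section RankReduction.
Context {R : realType} {n : nat} {A0 A1 A2 : 'M[R]_(1 + n)} {b1 b2 v M : R}.
Implicit Types (y : 'cV[R]_(1 + n)) (W : 'M[R]_(1 + n)).

Definition pencil y W k a d :=
  y *m y^T + W + a *: (y *m (col k W)^T + col k W *m y^T) + d *: (col k W *m (col k W)^T).

Lemma frob_pencil A y W k a d : frob A (pencil y W k a d)
  = frob A (y *m y^T + W) + a * frob A (y *m (col k W)^T + col k W *m y^T)
    + d * frob A (col k W *m (col k W)^T).
Proof. by rewrite /pencil 2!frobD !frobZ. Qed.

Lemma feas_pencil {y W k a d} :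
    psd W -> y ord0 0 = 1 -> W ord0 ord0 = 0 -> a ^+ 2 <= (W k k)^-1 + d ->
    frob A1 (pencil y W k a d) <= b1 -> frob A2 (pencil y W k a d) <= b2 ->
  feas_rel A1 A2 b1 b2 (pencil y W k a d).
Proof.
move=> psdW y0 W00 above c1 c2; split.
  rewrite /pencil schur_comp_pencil; apply: psdD; last exact: psd_schur_comp.
  by apply: psdD; [exact: psd_outer | apply: psdZ; [rewrite subr_ge0 | exact: psd_outer]].
have W0k : W ord0 k = 0 by exact: psd_diag_eq0 psdW W00.
by split=> //; rewrite !mxE !big_ord1 !mxE y0 W00 W0k; ring.
Qed.

Hypothesis v_le_rel : forall Y, feas_rel A1 A2 b1 b2 Y -> v <= frob A0 Y.
Hypothesis rel_optimal_bounded : forall Y,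
  feas_rel A1 A2 b1 b2 Y -> frob A0 Y = v -> forall i j, `|Y i j| <= M.

Lemma optimal_step y W k :
    psd W -> y ord0 0 = 1 -> W ord0 ord0 = 0 -> 0 < W k k ->
    feas_rel A1 A2 b1 b2 (y *m y^T + W) -> frob A0 (y *m y^T + W) = v ->
    frob A2 (y *m y^T + W) < b2 ->
  exists2 y' : 'cV[R]_(1 + n), y' ord0 0 = 1 &
    [/\ feas_rel A1 A2 b1 b2 (y' *m y'^T + schur_comp W k),
        frob A0 (y' *m y'^T + schur_comp W k) = v
      & frob A2 (y' *m y'^T + schur_comp W k) < b2].
Proof.
move=> psdW y0 W00 Wkk_gt0 [_ [_ [feas1 _]]] X_opt slack2.
have mu_gt0 : 0 < (W k k)^-1 by rewrite invr_gt0.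
pose X := y *m y^T + W; pose Y := y *m (col k W)^T + col k W *m y^T.
pose Z := col k W *m (col k W)^T.
have origin_min a d : a ^+ 2 <= (W k k)^-1 + d ->
    frob A1 X + a * frob A1 Y + d * frob A1 Z <= b1 ->
    frob A2 X + a * frob A2 Y + d * frob A2 Z <= b2 ->
    frob A0 X <= frob A0 X + a * frob A0 Y + d * frob A0 Z.
  rewrite -!frob_pencil X_opt => above c1 c2.
  exact/v_le_rel/(feas_pencil psdW y0 W00 above).
have optimal_bounded d : 0 <= d ->
    frob A1 X + d * frob A1 Z <= b1 -> frob A2 X + d * frob A2 Z <= b2 ->
    frob A0 X + d * frob A0 Z = frob A0 X -> d <= (M - X k k) / W k k ^+ 2.
  have frob_pencil0 A : frob A (pencil y W k 0 d) = frob A X + d * frob A Z.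
    by rewrite frob_pencil mul0r addr0.
  rewrite -!frob_pencil0 => d_ge0 c1 c2 opt_d.
  have above : 0 ^+ 2 <= (W k k)^-1 + d by rewrite expr0n /= addr_ge0 // ltW.
  (* the (k, k) entry of [pencil y W k 0 d] is [X k k + d * W k k ^+ 2] *)
  have := rel_optimal_bounded _ (feas_pencil psdW y0 W00 above c1 c2) (etrans opt_d X_opt) k k.
  rewrite /pencil !mxE !big_ord1 !mxE mul0r addr0 => /(le_trans (ler_norm _)).
  by rewrite ler_pdivlMr ?exprn_gt0 // expr2; lra.
have [a [c1 c2 c0]] := parabola_descent mu_gt0 feas1 slack2 origin_min _ optimal_bounded.
rewrite -!frob_pencil in c1 c2 c0.
have on_parabola : pencil y W k a (a ^+ 2 - (W k k)^-1)
    = (y + a *: col k W) *m (y + a *: col k W)^T + schur_comp W k.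
  rewrite /pencil schur_comp_pencil.
  have -> : (W k k)^-1 + (a ^+ 2 - (W k k)^-1) - a ^+ 2 = 0 by ring.
  by rewrite scale0r addr0.
exists (y + a *: col k W).
  by rewrite !mxE y0 (psd_diag_eq0 _ _ k psdW W00) mulr0 addr0.
rewrite -on_parabola.
have above : a ^+ 2 <= (W k k)^-1 + (a ^+ 2 - (W k k)^-1) by rewrite addrCA subrr addr0.
have feas' := feas_pencil psdW y0 W00 above c1 (ltW c2).
by split=> //; apply/le_anti; rewrite v_le_rel // andbT -X_opt.
Qed.

Lemma optimal_rank1 y W :
    psd W -> y ord0 0 = 1 -> W ord0 ord0 = 0 ->
    feas_rel A1 A2 b1 b2 (y *m y^T + W) -> frob A0 (y *m y^T + W) = v ->
    frob A2 (y *m y^T + W) < b2 ->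
  exists2 Z, feas_opt A1 A2 b1 b2 Z & frob A0 Z = v.
Proof.
have [k] := ubnP #|diag_support W|; elim: k y W => // k IH y W supp_lt.
move=> psdW y0 W00 X_feas X_opt slack2.
have [/existsP[i Wii] | /existsPn diag0] := boolP [exists i, W i i != 0].
  have Wii_gt0 : 0 < W i i by rewrite lt_def Wii psd_diag_ge0.
  have [y' y'0 [feas' opt' slack']] :=
    optimal_step y W i psdW y0 W00 Wii_gt0 X_feas X_opt slack2.
  apply: (IH y' (schur_comp W i)) => //.
  - rewrite -ltnS (leq_trans _ supp_lt) // ltnS proper_card //.
    by rewrite diag_support_schur_comp // inE.
  - exact: psd_schur_comp.
  - by rewrite schur_compE W00 (psd_diag_eq0 _ _ i psdW W00) mulr0 mulr0 subr0.
have W0 : W = 0 by apply: psd_diag0_eq0 psdW _ => j; apply/eqP/negbNE.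
rewrite W0 addr0 in X_feas X_opt; exists (y *m y^T) => //; split=> //.
exact: leq_trans (mxrankM_maxl _ _) (rank_leq_col _).
Qed.

Lemma optimal_rank1_of_slack2 (X : 'M[R]_(1 + n)) :
    feas_rel A1 A2 b1 b2 X -> frob A0 X = v -> frob A2 X < b2 ->
  exists2 Z, feas_opt A1 A2 b1 b2 Z & frob A0 Z = v.
Proof.
move=> X_feas; have [psdX [X00 _]] := X_feas.
have X_dec : X = col ord0 X *m (col ord0 X)^T + schur_comp X ord0.
  by rewrite /schur_comp X00 invr1 scale1r addrC subrK.
rewrite X_dec in X_feas * => X_opt slack2.
apply: optimal_rank1 (psd_schur_comp _ _ psdX) _ _ X_feas X_opt slack2.
  by rewrite mxE.
by rewrite schur_compE X00 invr1 mul1r mulr1 subrr.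
Qed.

End RankReduction.

Lemma feas_relC {R : realType} {n : nat} (A1 A2 : 'M[R]_(1 + n)) b1 b2 Y :
  feas_rel A1 A2 b1 b2 Y -> feas_rel A2 A1 b2 b1 Y.
Proof. by case=> [psdY [Y00 [c1 c2]]]. Qed.

Lemma Vopt_eq_Vrel {R : realType} {n : nat} (A0 A1 A2 : 'M[R]_(1 + n)) b1 b2 :
    (exists2 Z, feas_opt A1 A2 b1 b2 Z & (frob A0 Z)%:E = Vrel A0 A1 A2 b1 b2) ->
  Vopt A0 A1 A2 b1 b2 = Vrel A0 A1 A2 b1 b2.
Proof.
move=> [Z Z_feas Z_opt]; apply/le_anti/andP; split.
  by rewrite -Z_opt; apply: ereal_inf_lbound; exists Z.
by apply: ereal_inf_le_tmp => _ [Y [Y_feas _] <-]; exists Y.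
Qed.

Theorem corollary9 (R : realType) (n : nat)
  (Q0 Q1 Q2 : 'M[R]_n) (q0 q1 q2 : 'cV[R]_n) (b1 b2 : R) :
  Q0^T = Q0 -> Q1^T = Q1 -> Q2^T = Q2 ->
  let A0 := liftA Q0 q0 in let A1 := liftA Q1 q1 in let A2 := liftA Q2 q2 in
  Vrel A0 A1 A2 b1 b2 \is a fin_num ->
  (exists M : R, forall X : 'M[R]_(1 + n),
      feas_rel A1 A2 b1 b2 X -> (frob A0 X)%:E = Vrel A0 A1 A2 b1 b2 ->
      forall i j, `|X i j| <= M) ->
  (exists X : 'M[R]_(1 + n),
      [/\ feas_rel A1 A2 b1 b2 X, (frob A0 X)%:E = Vrel A0 A1 A2 b1 b2 &
          frob A1 X < b1 \/ frob A2 X < b2]) ->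
  Vopt A0 A1 A2 b1 b2 = Vrel A0 A1 A2 b1 b2.
Proof.
move=> _ _ _ A0 A1 A2 Vrel_fin [M bounded] [X [X_feas X_opt slack]].
have v_E := fineK Vrel_fin; set v := fine _ in v_E.
have v_le Y : feas_rel A1 A2 b1 b2 Y -> v <= frob A0 Y.
  by move=> Y_feas; rewrite -lee_fin v_E; apply: ereal_inf_lbound; exists Y.
have v_bounded Y : feas_rel A1 A2 b1 b2 Y -> frob A0 Y = v -> forall i j, `|Y i j| <= M.
  by move=> Y_feas Y_opt; apply: bounded; rewrite ?Y_opt.
have {}X_opt : frob A0 X = v by apply: EFin_inj; rewrite X_opt v_E.
apply: Vopt_eq_Vrel; rewrite -v_E.
suff [Z Z_feas Z_opt] : exists2 Z, feas_opt A1 A2 b1 b2 Z & frob A0 Z = v.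
  by exists Z; rewrite ?Z_opt.
case: slack => [slack1|]; last exact: optimal_rank1_of_slack2 v_le v_bounded X X_feas X_opt.
have [Z [Z_feas Z_rk] Z_opt] := optimal_rank1_of_slack2 (fun Y => v_le Y \o feas_relC _ _ _ _ _)
  (fun Y => v_bounded Y \o feas_relC _ _ _ _ _) X (feas_relC _ _ _ _ _ X_feas) X_opt slack1.
by exists Z => //; split=> //; apply: feas_relC.
Qed.
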